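(* Let $\mathbf{u}=(u_n)$ be an a-sequence. Then the torsion subgroup $t(s_\mathbf{u}(\mathbb{T}))$ of $s_\mathbf{u}(\mathbb{T})$ is dense in $s_\mathbf{u}(\mathbb{T})$ with respect to the restriction of the topology $\tau_\mathbf{u}$ to $s_\mathbf{u}(\mathbb{T})$.
   Context: An a-sequence is a strictly increasing sequence of integers $\mathbf{u}=(u_n)_{n\in\mathbb{N}}$ with $u_n\mid u_{n+1}$ for all $n$. $\mathbb{T}=\mathbb{R}/\mathbb{Z}$, $\|x\|$ is the distance from $x$ to the nearest integer, $d(x,y)=\|x-y\|$. $s_\mathbf{u}(\mathbb{T})=\{x\in\mathbb{T}: u_nx\to0\text{ in }\mathbb{T}\}$. $\tau_\mathbf{u}$ is the topology on $\mathbb{T}$ induced by the metric $\varrho_\mathbf{u}(x,y)=\sup_n\max\{d(x,y),d(u_nx,u_ny)\}$. *)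

(* the circle T = R/Z is represented by real numbers;
   all notions below are 1-periodic, hence well defined on T. *)
From Stdlib Require Import Reals ZArith.
Open Scope R_scope.

Definition normT (x : R) : R := Rmin (frac_part x) (1 - frac_part x).

Definition dT (x y : R) : R := normT (x - y).

Definition a_sequence (u : nat -> Z) : Prop :=
  forall n : nat, (u n < u (S n))%Z /\ Z.divide (u n) (u (S n)).

Definition s_u (u : nat -> Z) (x : R) : Prop :=
  Un_cv (fun n => normT (IZR (u n) * x)) 0.

Definition torsionT (x : R) : Prop :=
  exists (m : nat) (k : Z), (0 < m)%nat /\ INR m * x = IZR k.

(* rho_u(x,y) < eps, where
   rho_u(x,y) = sup_n max{ d(x,y), d(u_n x, u_n y) } *)
Definition rho_lt (u : nat -> Z) (x y eps : R) : Prop :=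
  exists r : R, r < eps /\
    forall n : nat, dT x y <= r /\ dT (IZR (u n) * x) (IZR (u n) * y) <= r.

(* A is dense in the subspace B of (T, tau_u):
   every rho_u-ball centered at a point of B meets A /\ B *)
Definition dense_in_tau (u : nat -> Z) (A B : R -> Prop) : Prop :=
  forall x : R, B x -> forall eps : R, 0 < eps ->
    exists y : R, A y /\ B y /\ rho_lt u x y eps.

(* Given x in s_u(T) and eps > 0, pick N with ||u_n x|| < eps/2 for n >= N, and
   let y = k / u_N where k is an integer nearest to u_N x.  Then y is torsion and
   u_n y is an integer for n >= N (since u_N | u_n), so y lies in s_u(T) and
   d(u_n x, u_n y) = ||u_n x|| < eps/2 there.  For n <= N we have u_n | u_N, so
   ||u_n (x - y)|| <= |u_N (x - y)| = ||u_N x|| < eps/2, and likewise for d(x, y). *)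

From Stdlib Require Import Reals ZArith Lra Lia.
Open Scope R_scope.

Lemma normT_nonneg z : 0 <= normT z.
Proof. unfold normT. destruct (base_fp z). apply Rmin_glb; lra. Qed.

Lemma normT_le_dist_int z j : normT z <= Rabs (z - IZR j).
Proof.
  unfold normT. destruct (base_fp z) as [H1 H2].
  unfold frac_part in *. set (I := Int_part z) in *.
  destruct (Z_le_gt_dec j I) as [Hj|Hj].
  - apply IZR_le in Hj. apply Rle_trans with (z - IZR I); [apply Rmin_l|].
    apply Rle_trans with (z - IZR j); [lra| apply Rle_abs].
  - assert (Hj' : (I + 1 <= j)%Z) by lia. apply IZR_le in Hj'. rewrite plus_IZR in Hj'.
    apply Rle_trans with (1 - (z - IZR I)); [apply Rmin_r|].
    rewrite Rabs_minus_sym.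
    apply Rle_trans with (IZR j - z); [lra| apply Rle_abs].
Qed.

Lemma normT_le_Rabs z : normT z <= Rabs z.
Proof. rewrite <- (Rminus_0_r z) at 2. apply (normT_le_dist_int z 0). Qed.

Lemma normT_attained z : exists k, Rabs (z - IZR k) = normT z.
Proof.
  unfold normT. destruct (base_fp z) as [H1 H2].
  unfold frac_part in *. set (I := Int_part z) in *.
  destruct (Rle_dec (z - IZR I) (1 - (z - IZR I))) as [H|H].
  - exists I. rewrite Rmin_left by lra. apply Rabs_pos_eq; lra.
  - exists (I + 1)%Z. rewrite Rmin_right by lra. rewrite plus_IZR.
    rewrite Rabs_left1 by lra. ring.
Qed.

Lemma normT_add_IZR z k : normT (z + IZR k) = normT z.
Proof.
  apply Rle_antisym.
  - destruct (normT_attained z) as [j Hj]. rewrite <- Hj.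
    replace (z - IZR j) with (z + IZR k - IZR (j + k)) by (rewrite plus_IZR; ring).
    apply normT_le_dist_int.
  - destruct (normT_attained (z + IZR k)) as [j Hj]. rewrite <- Hj.
    replace (z + IZR k - IZR j) with (z - IZR (j - k)) by (rewrite minus_IZR; ring).
    apply normT_le_dist_int.
Qed.

Lemma normT_IZR j : normT (IZR j) = 0.
Proof.
  apply Rle_antisym; [|apply normT_nonneg].
  rewrite <- (Rplus_0_l (IZR j)), normT_add_IZR.
  rewrite <- Rabs_R0 at 2. apply normT_le_Rabs.
Qed.

Lemma dT_IZR_r z j : dT z (IZR j) = normT z.
Proof. unfold dT. unfold Rminus. rewrite <- opp_IZR. apply normT_add_IZR. Qed.

Lemma Rabs_le_Zmult c w : c <> 0%Z -> Rabs w <= Rabs (IZR c * w).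
Proof.
  intro Hc. rewrite Rabs_mult, Rabs_Zabs.
  assert (1 <= IZR (Z.abs c)) by (apply IZR_le; lia).
  pose proof (Rabs_pos w). nra.
Qed.

Lemma dT_Zmult_le_divide (a b : Z) x y : b <> 0%Z -> Z.divide a b ->
  dT (IZR a * x) (IZR a * y) <= Rabs (IZR b * (x - y)).
Proof.
  intros Hb [c Hc]. subst b.
  assert (Hc0 : c <> 0%Z) by lia.
  unfold dT. apply Rle_trans with (Rabs (IZR a * x - IZR a * y)); [apply normT_le_Rabs|].
  replace (IZR (c * a) * (x - y)) with (IZR c * (IZR a * x - IZR a * y))
    by (rewrite mult_IZR; ring).
  now apply Rabs_le_Zmult.
Qed.

Lemma IZR_mult_Zdiv_int (a k M : Z) : M <> 0%Z -> Z.divide M a ->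
  exists j, IZR a * (IZR k / IZR M) = IZR j.
Proof.
  intros HM [c Hc]. exists (c * k)%Z. subst a. rewrite !mult_IZR.
  field. now apply not_0_IZR.
Qed.

Lemma torsionT_Zdiv k M : M <> 0%Z -> torsionT (IZR k / IZR M).
Proof.
  intro HM. assert (HMR : IZR M <> 0) by now apply not_0_IZR.
  destruct (Z_lt_le_dec 0 M) as [Hpos|Hneg].
  - exists (Z.to_nat M), k. split; [lia|].
    rewrite INR_IZR_INZ, Z2Nat.id by lia. now field.
  - exists (Z.to_nat (- M)), (- k)%Z. split; [lia|].
    rewrite INR_IZR_INZ, Z2Nat.id by lia. rewrite !opp_IZR. now field.
Qed.

Lemma s_u_tail u x e : s_u u x -> 0 < e ->
  exists N, forall n, (N <= n)%nat -> normT (IZR (u n) * x) < e.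
Proof.
  intros Hx He. destruct (Hx e He) as [N HN]. exists N. intros n Hn.
  specialize (HN n Hn). unfold R_dist in HN. rewrite Rminus_0_r in HN.
  eapply Rle_lt_trans; [apply Rle_abs|exact HN].
Qed.

Lemma s_u_of_eventually_int u y N :
  (forall n, (N <= n)%nat -> exists j, IZR (u n) * y = IZR j) -> s_u u y.
Proof.
  intros Hint e He. exists N. intros n Hn. destruct (Hint n Hn) as [j Hj].
  unfold R_dist. now rewrite Hj, normT_IZR, Rminus_0_r, Rabs_R0.
Qed.

Lemma a_sequence_divide u : a_sequence u -> forall n m, (n <= m)%nat -> Z.divide (u n) (u m).
Proof.
  intros hu n m Hnm. induction Hnm.
  - apply Z.divide_refl.
  - eapply Z.divide_trans; [exact IHHnm| apply (hu m)].
Qed.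

Lemma a_sequence_neq0 u : a_sequence u -> forall n, u n <> 0%Z.
Proof.
  intros hu n H. destruct (hu n) as [H1 H2]. rewrite H in H1, H2.
  apply Z.divide_0_l in H2. lia.
Qed.

Theorem propositionD (u : nat -> Z) (hu : a_sequence u) :
  dense_in_tau u (fun x => torsionT x /\ s_u u x) (s_u u).
Proof.
  intros x Hx eps Heps.
  destruct (s_u_tail u x (eps / 2) Hx) as [N HN]; [lra|].
  pose proof (a_sequence_neq0 u hu N) as HM.
  destruct (normT_attained (IZR (u N) * x)) as [k Hk].
  set (y := IZR k / IZR (u N)).
  assert (Hdiff : Rabs (IZR (u N) * (x - y)) < eps / 2).
  { replace (IZR (u N) * (x - y)) with (IZR (u N) * x - IZR k)
      by (unfold y; field; now apply not_0_IZR).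
    rewrite Hk. now apply HN. }
  assert (Hint : forall n, (N <= n)%nat -> exists j, IZR (u n) * y = IZR j)
    by (intros n Hn; apply IZR_mult_Zdiv_int; [exact HM | now apply a_sequence_divide]).
  assert (Hsy : s_u u y) by exact (s_u_of_eventually_int u y N Hint).
  exists y. split; [split; [now apply torsionT_Zdiv | exact Hsy] | split; [exact Hsy |]].
  exists (eps / 2). split; [lra|]. intro n. split.
  - rewrite <- (Rmult_1_l x), <- (Rmult_1_l y) at 1.
    left. eapply Rle_lt_trans; [|exact Hdiff].
    apply (dT_Zmult_le_divide 1); [exact HM | apply Z.divide_1_l].
  - left. destruct (Nat.le_ge_cases n N) as [Hn|Hn].
    + eapply Rle_lt_trans; [|exact Hdiff].
      apply dT_Zmult_le_divide; [exact HM | now apply a_sequence_divide].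
    + destruct (Hint n Hn) as [j Hj]. rewrite Hj, dT_IZR_r. now apply HN.
Qed.
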